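(* Let $f_E$ be the solution of the discrete wave equation in the cone $|j|+|k|<n$ with boundary conditions $(0;1,0,0,0)$. Then for all $(j,k,n)\in\Lambda^+$ with $n\ge 1$, $$f_E(j,k,n)=\frac12\sum_{s=1}^{n-1}f_0(j-s,k,n-s).$$
   Context: Let $\Lambda^+=\{(j,k,n)\in\mathbb Z^2\times\mathbb Z_{\ge0}: j+k+n\text{ odd}\}$. The fundamental solution $f_0:\Lambda^+\to\mathbb R$ is defined by: $f_0(j,k,0)=0$ for all $j,k$; $f_0(0,0,1)=1$ and $f_0(j,k,1)=0$ for all other $(j,k)$; and for all $(j,k,n+1)\in\Lambda^+$ with $n\ge1$, $f_0(j,k,n+1)+f_0(j,k,n-1)=\tfrac12\big(f_0(j+1,k,n)+f_0(j-1,k,n)+f_0(j,k+1,n)+f_0(j,k-1,n)\big)$ (the discrete wave equation). Given $b_0,b_E,b_N,b_W,b_S\in\mathbb C$, $f:\Lambda^+\to\mathbb C$ solves the discrete wave equation in the cone $|j|+|k|<n$ with boundary conditions $(b_0;b_E,b_N,b_W,b_S)$ if: (0) $f(j,k,n)=0$ whenever $|j|+|k|\ge n$; (1) $f(0,0,1)=b_0$; (2) for each $n\ge1$: $f(-n,0,n+1)=\tfrac12(f(-n+1,0,n)+b_W)$, $f(0,n,n+1)=\tfrac12(f(0,n-1,n)+b_N)$, $f(0,-n,n+1)=\tfrac12(f(0,-n+1,n)+b_S)$, $f(n,0,n+1)=\tfrac12(f(n-1,0,n)+b_E)$; (3) for each $(j,k,n+1)\in\Lambda^+$ with $n\ge1$,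 $|j|+|k|\le n$, $\{|j|,|k|\}\ne\{0,n\}$, the discrete wave equation above holds for $f$. These conditions determine $f$ uniquely. *)

(* Functions on Lambda^+ are modelled as total functions
   int -> int -> nat -> R; all conditions are imposed only at points of
   Lambda^+ (j + k + n odd). Values are in an arbitrary numFieldType R
   (this includes algC, the MathComp model of complex algebraic numbers). *)
From HB Require Import structures.
From mathcomp Require Import all_boot all_order all_algebra.
Set Implicit Arguments. Unset Strict Implicit. Unset Printing Implicit Defensive.
Import Order.TTheory GRing.Theory Num.Theory.
Local Open Scope ring_scope.

Definition inLam (j k : int) (n : nat) : bool := odd (absz (j + k + n%:Z)).

(* the discrete wave equation at the point (j,k,n+1) *)
Definition wave_eq {R : numFieldType} (f : int -> int -> nat -> R)
  (j k : int) (n : nat) : Prop :=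
  f j k n.+1 + f j k n.-1 =
  (f (j + 1) k n + f (j - 1) k n + f j (k + 1) n + f j (k - 1) n) / 2.

Definition is_fundamental {R : numFieldType} (f : int -> int -> nat -> R) : Prop :=
  (forall j k, inLam j k 0 -> f j k 0%N = 0) /\
  f 0 0 1%N = 1 /\
  (forall j k, inLam j k 1 -> (j, k) <> (0, 0) -> f j k 1%N = 0) /\
  (forall j k (n : nat), inLam j k n.+1 -> (1 <= n)%N -> wave_eq f j k n).

Definition solves_cone {R : numFieldType} (f : int -> int -> nat -> R)
  (b0 bE bN bW bS : R) : Prop :=
  (forall j k (n : nat), inLam j k n -> n%:Z <= `|j| + `|k| -> f j k n = 0) /\
  f 0 0 1%N = b0 /\
  (forall n : nat, (1 <= n)%N ->
     f (- n%:Z) 0 n.+1 = (f (- n%:Z + 1) 0 n + bW) / 2 /\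
     f 0 n%:Z n.+1 = (f 0 (n%:Z - 1) n + bN) / 2 /\
     f 0 (- n%:Z) n.+1 = (f 0 (- n%:Z + 1) n + bS) / 2 /\
     f n%:Z 0 n.+1 = (f (n%:Z - 1) 0 n + bE) / 2) /\
  (forall j k (n : nat), inLam j k n.+1 -> (1 <= n)%N ->
     `|j| + `|k| <= n%:Z ->
     ~ ((`|j| = 0 /\ `|k| = n%:Z) \/ (`|j| = n%:Z /\ `|k| = 0)) ->
     wave_eq f j k n).

(* The candidate  h(j,k,n) = 1/2 sum_(1 <= s < n) f0(j-s,k,n-s)  is a superposition
   of translates of f0, each of which satisfies the wave equation; the translate
   s = n-1 contributes the initial impulse f0(0,0,1) = 1 exactly at the east tip
   (n-1,0,n), so h satisfies the wave equation everywhere else.  Along the east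
   edge f0(m,0,m+1) = 2^-m, and this geometric decay is precisely the east boundary
   condition with b_E = 1.  Since the cone problem has at most one solution,
   f_E = h. *)
From HB Require Import structures.
From mathcomp Require Import all_boot all_order all_algebra.
From mathcomp Require Import zify ring.
Set Implicit Arguments.
Unset Strict Implicit.
Unset Printing Implicit Defensive.
Import Order.TTheory GRing.Theory Num.Theory.
Local Open Scope ring_scope.

Ltac inLam_lia := unfold inLam in *; lia.

Lemma wave_eq_mulr (R : numFieldType) (f : int -> int -> nat -> R) (c : R) j k n :
  wave_eq f j k n -> wave_eq (fun j k n => f j k n * c) j k n.
Proof. by rewrite /wave_eq -!mulrDl => ->; rewrite mulrAC. Qed.

Section SolvesConeUnique.
Variables (R : numFieldType) (b0 bE bN bW bS : R).

Lemma solves_cone_unique (f g : int -> int -> nat -> R) :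
  solves_cone f b0 bE bN bW bS -> solves_cone g b0 bE bN bW bS ->
  forall j k n, inLam j k n -> f j k n = g j k n.
Proof.
move=> [fc [f1 [fb fw]]] [gc [g1 [gb gw]]].
suff step n : (forall j k, inLam j k n -> f j k n = g j k n) /\
              (forall j k, inLam j k n.+1 -> f j k n.+1 = g j k n.+1).
  by move=> j k n; apply: (step n).1.
elim: n => [|n [IH1 IH2]].
  split=> j k hj; first by rewrite fc ?gc //; lia.
  have [/andP[/eqP-> /eqP->]|not_origin] := boolP ((j == 0) && (k == 0)); first by rewrite f1 g1.
  by rewrite fc ?gc //; lia.
split=> // j k hj.
have [hc|] := ltrP (`|j| + `|k|) n.+2%:Z; last by move=> hc; rewrite fc ?gc.
have [fW [fN [fS fE]]] := fb n.+1 isT.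
have [gW [gN [gS gE]]] := gb n.+1 isT.
have [tip|ntip] := boolP [|| (j == n.+1%:Z) && (k == 0), (j == - n.+1%:Z) && (k == 0),
                            (j == 0) && (k == n.+1%:Z) | (j == 0) && (k == - n.+1%:Z)].
  case/or4P: tip => /andP[/eqP-> /eqP->];
    [rewrite fE gE | rewrite fW gW | rewrite fN gN | rewrite fS gS];
    by rewrite IH2 //; inLam_lia.
have Ef := fw j k n.+1 hj isT ltac:(lia) ltac:(lia).
have Eg := gw j k n.+1 hj isT ltac:(lia) ltac:(lia).
rewrite /wave_eq /= IH1 ?IH2 in Ef; try inLam_lia.
by apply: (addIr (g j k n)); rewrite Ef Eg.
Qed.

End SolvesConeUnique.

Section FundamentalSolution.
Variables (R : numFieldType) (f0 : int -> int -> nat -> R).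
Hypothesis f0_fund : is_fundamental f0.

Lemma fundamental_cone j k n : inLam j k n -> n%:Z <= `|j| + `|k| -> f0 j k n = 0.
Proof.
case: f0_fund => f0_0 [_ [f0_1 f0_wave]].
suff step : (forall j k, inLam j k n -> n%:Z <= `|j| + `|k| -> f0 j k n = 0) /\
            (forall j k, inLam j k n.+1 -> n.+1%:Z <= `|j| + `|k| -> f0 j k n.+1 = 0).
  exact: step.1.
elim: {j k} n => [|n [IH1 IH2]].
  split=> [j k hj _|j k hj hc]; first exact: f0_0.
  by apply: f0_1 => // -[ej ek]; move: hc; rewrite ej ek.
split=> // j k hj hc.
have := f0_wave j k n.+1 hj isT; rewrite /wave_eq /= IH1 ?IH2; try inLam_lia.
by rewrite !addr0 mul0r.
Qed.

Lemma fundamental_east_edge m : f0 m.+1%:Z 0 m.+2 = f0 m%:Z 0 m.+1 / 2.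
Proof.
case: f0_fund => _ [_ [_ f0_wave]].
have := f0_wave m.+1%:Z 0 m.+1 ltac:(inLam_lia) isT; rewrite /wave_eq /=.
rewrite [f0 _ 0 m]fundamental_cone; try inLam_lia.
rewrite [f0 (_ + 1) _ _]fundamental_cone; try inLam_lia.
rewrite [f0 _ (_ + 1) _]fundamental_cone; try inLam_lia.
rewrite [f0 _ (_ - 1) _]fundamental_cone; try inLam_lia.
by rewrite !addr0 add0r => ->; congr (f0 _ _ _ / 2); lia.
Qed.

Definition east_sum (j k : int) (n : nat) : R :=
  \sum_(1 <= s < n) f0 (j - s%:Z) k (n - s)%N.

Lemma east_sum_cone j k n : inLam j k n -> n%:Z <= `|j| + `|k| -> east_sum j k n = 0.
Proof.
move=> hj hc; rewrite /east_sum big_nat_cond big1 // => s /andP[hs _].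
by apply: fundamental_cone; inLam_lia.
Qed.

Lemma east_sum_west j k n : inLam j k n -> j <= 0 -> n%:Z <= `|k| - j + 2 ->
  east_sum j k n = 0.
Proof.
move=> hj hj0 hc; rewrite /east_sum big_nat_cond big1 // => s /andP[hs _].
by apply: fundamental_cone; inLam_lia.
Qed.

Lemma east_sum_east_edge m :
  east_sum m.+1%:Z 0 m.+2 = f0 m%:Z 0 m.+1 + east_sum m%:Z 0 m.+1.
Proof.
rewrite /east_sum big_nat_recl //; congr (_ + _); first by congr f0; lia.
by apply: eq_big_nat => s hs; congr f0; lia.
Qed.

(* Both terms are explicit: f0 m 0 m.+1 = 2^-m and east_sum m 0 m.+1 = 2 - 2^(1-m). *)
Lemma east_sum_east_edge_half m : f0 m%:Z 0 m.+1 + east_sum m%:Z 0 m.+1 / 2 = 1.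
Proof.
elim: m => [|m IH].
  by rewrite /east_sum big_geq // mul0r addr0; case: f0_fund => _ [].
rewrite fundamental_east_edge east_sum_east_edge -[RHS]IH; by field.
Qed.

Lemma east_sum_wave j k n : inLam j k n.+2 -> (j, k) <> (n.+1%:Z, 0) ->
  wave_eq east_sum j k n.+1.
Proof.
case: f0_fund => f0_0 [_ [f0_1 f0_wave]] hj ntip.
have top : east_sum j k n.+2 = \sum_(1 <= s < n.+1) f0 (j - s%:Z) k (n.+1 - s).+1.
  rewrite /east_sum big_nat_recr //= subSnn [X in _ + X]f0_1; first last.
  - by move=> [ej ek]; apply: ntip; rewrite ek; congr pair; lia.
  - inLam_lia.
  by rewrite addr0; apply: eq_big_nat => s hs; congr f0; lia.
have bottom : east_sum j k n = \sum_(1 <= s < n.+1) f0 (j - s%:Z) k (n.+1 - s).-1.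
  case: n hj {ntip top} => [|n] hj; first by rewrite /east_sum !big_geq.
  rewrite /east_sum [RHS]big_nat_recr //= subSnn [X in _ = _ + X]f0_0; last by inLam_lia.
  by rewrite addr0; apply: eq_big_nat => s hs; congr f0; lia.
rewrite /wave_eq /= top bottom -big_split /= /east_sum -!big_split /= mulr_suml.
apply: eq_big_nat => s hs.
rewrite f0_wave; [|inLam_lia|lia].
by rewrite [j + 1 - _]addrAC [j - 1 - _]addrAC.
Qed.

Lemma half_east_sum_solves_cone :
  solves_cone (fun j k n => east_sum j k n / 2) 0 1 0 0 0.
Proof.
split; first by move=> j k n hj hc; rewrite east_sum_cone ?mul0r.
split; first by rewrite /east_sum big_geq ?mul0r.
split; last first.
  move=> j k n hj hn _ ntip; case: n hn hj ntip => // n _ hj ntip.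
  by apply: wave_eq_mulr; apply: east_sum_wave => // -[ej ek]; apply: ntip; lia.
move=> [|m] // _; split; [|split; [|split]]; last first.
  have -> : m.+1%:Z - 1 = m%:Z by lia.
  rewrite east_sum_east_edge.
  have -> : f0 m%:Z 0 m.+1 = 1 - east_sum m%:Z 0 m.+1 / 2.
    by apply: (addIr (east_sum m%:Z 0 m.+1 / 2)); rewrite subrK east_sum_east_edge_half.
  by field.
all: by rewrite !east_sum_west ?mul0r ?addr0 ?mul0r //; inLam_lia.
Qed.

End FundamentalSolution.

Theorem mainTheorem5 (R : numFieldType) (f0 fE : int -> int -> nat -> R) :
  is_fundamental f0 ->
  solves_cone fE 0 1 0 0 0 ->
  forall (j k : int) (n : nat), inLam j k n -> (1 <= n)%N ->
    fE j k n = (\sum_(1 <= s < n) f0 (j - s%:Z) k (n - s)%N) / 2.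
Proof.
move=> f0_fund fE_cone j k n hj _.
by rewrite (solves_cone_unique fE_cone (half_east_sum_solves_cone f0_fund) hj).
Qed.
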